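(* Let $(e_i)_{i\in\omega}$ be a sequence of events with $<_0$, $\mathrm{Add},\mathrm{Rem},\mathrm{Cnt}$, $\mathrm{val}$, $\chi$ as in the context. Then: (1) If there is a sequence of finite sets $(D_i)_{i\in\omega}$, $D_i\subseteq\mathbb N$, witnessing the state-based specification, then there is a function $\gamma$ on the $\mathrm{Op}^1$ events of the sequence satisfying FS0, FS1 and FS2. (2) If there is a function $\gamma$ on the $\mathrm{Op}^1$ events of the sequence satisfying FS0, FS1 and FS2, then there is a sequence of finite sets $(D_i)_{i\in\omega}$, $D_i\subseteq\mathbb N$, with $D_0=\emptyset$ such that every triple $(D_i,e_i,D_{i+1})$ is correct in the sense of the table in the context.
   Context: Setting: an infinite sequence of events $(e_i)_{i\in\omega}$, linearly ordered by $<_0$ where $e_i<_0e_j$ iff $i<j$. Three unary predicates $\mathrm{Add},\mathrm{Rem},\mathrm{Cnt}$ partition the events. Each event $a$ has a key $\mathrm{val}(a)\in\mathbb N$ and a status $\chi(a)\in\{0,1,f\}$, with $\chi(a)\in\{0,1\}$ whenever $\mathrm{Cnt}(a)$. Notation: for $p\in\{0,1,f\}$, $\mathrm{Add}^p(a)$ abbreviates $\mathrm{Add}(a)\wedge\chi(a)=p$, and $\mathrm{Rem}^p(a)$ similarly; $\mathrm{Cnt}^p$ similarly for $p\in\{0,1\}$; for $p\in\{0,1\}$, $\mathrm{Op}^p(a)$ abbreviates $(\mathrm{Add}(a)\vee\mathrm{Rem}(a)\vee\mathrm{Cnt}(a))\wedge\chi(a)=p$. State-based specification: a sequence $(D_i)_{i\in\omega}$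 of finite subsets of $\mathbb N$ witnesses it if $D_0=\emptyset$ and for every $i$ the triple $(D,a,D')=(D_i,e_i,D_{i+1})$, with $x=\mathrm{val}(a)$, is correct, meaning: if $\chi(a)=f$ then $D'=D$; if $\mathrm{Add}^0(a)$ then $x\notin D$ and $D'=D\cup\{x\}$; if $\mathrm{Add}^1(a)$ then $x\in D$ and $D'=D$; if $\mathrm{Rem}^0(a)$ then $x\notin D$ and $D'=D$; if $\mathrm{Rem}^1(a)$ then $x\in D$ and $D'=D\setminus\{x\}$; if $\mathrm{Cnt}^0(a)$ then $x\notin D$ and $D'=D$; if $\mathrm{Cnt}^1(a)$ then $x\in D$ and $D'=D$. Functional specification (properties of a function $\gamma$): FS0: $<_0$ is a linear ordering of the events; $\mathrm{Add},\mathrm{Rem},\mathrm{Cnt}$ are pairwise disjoint; $\gamma$ is defined on the set of $\mathrm{Op}^1$ events and its values are $\mathrm{Add}^0$ events. FS1: for every event $a$ with $\mathrm{Op}^1(a)$: $\gamma(a)<_0 a$, $\mathrm{Add}^0(\gamma(a))$, $\mathrm{val}(a)=\mathrm{val}(\gamma(a))$, and there is no event $r$ with $\mathrm{Rem}^1(r)$, $\gamma(r)=\gamma(a)$ and $\gamma(a)<_0 r<_0 a$. FS2: for all events $a<_0 b$ with $\mathrm{Add}^0(a)$ and $\mathrm{Op}^0(b)$: if $\mathrm{val}(a)=\mathrm{val}(b)$ then there is an event $r$ with $a<_0 r<_0 b$, $\mathrm{Rem}^1(r)$ and $a=\gamma(r)$. *)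

From HB Require Import structures.
From mathcomp Require Import all_boot finmap.
Set Implicit Arguments. Unset Strict Implicit. Unset Printing Implicit Defensive.
Local Open Scope fset_scope.

(* Events are e_i, identified with their index i : nat; e_i <_0 e_j iff i < j. *)
Inductive kind := Add | Rem | Cnt.
Inductive status := S0 | S1 | Sf.

Section Events.
Variables (knd : nat -> kind) (chi : nat -> status) (val : nat -> nat).

Definition IsAdd a := knd a = Add.
Definition IsRem a := knd a = Rem.
Definition IsCnt a := knd a = Cnt.
Definition Add0 a := IsAdd a /\ chi a = S0.
Definition Add1 a := IsAdd a /\ chi a = S1.
Definition Rem0 a := IsRem a /\ chi a = S0.
Definition Rem1 a := IsRem a /\ chi a = S1.
Definition Cnt0 a := IsCnt a /\ chi a = S0.
Definition Cnt1 a := IsCnt a /\ chi a = S1.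
Definition Op0 a := (IsAdd a \/ IsRem a \/ IsCnt a) /\ chi a = S0.
Definition Op1 a := (IsAdd a \/ IsRem a \/ IsCnt a) /\ chi a = S1.

Definition correct (D : {fset nat}) (a : nat) (D' : {fset nat}) : Prop :=
  let x := val a in
  (chi a = Sf -> D' = D) /\
  (Add0 a -> x \notin D /\ D' = x |` D) /\
  (Add1 a -> x \in D /\ D' = D) /\
  (Rem0 a -> x \notin D /\ D' = D) /\
  (Rem1 a -> x \in D /\ D' = D `\ x) /\
  (Cnt0 a -> x \notin D /\ D' = D) /\
  (Cnt1 a -> x \in D /\ D' = D).

Definition witnesses (Ds : nat -> {fset nat}) : Prop :=
  Ds 0 = fset0 /\ forall i, correct (Ds i) i (Ds i.+1).

(* gamma is represented as a total function nat -> nat; only its values on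
   Op^1 events are relevant. FS0: the linear order and the disjointness of
   Add, Rem, Cnt hold by construction; gamma maps Op^1 events to Add^0 events. *)
Definition FS0 (gamma : nat -> nat) : Prop :=
  forall a, Op1 a -> Add0 (gamma a).

Definition FS1 (gamma : nat -> nat) : Prop :=
  forall a, Op1 a ->
    [/\ gamma a < a, Add0 (gamma a), val a = val (gamma a) &
        ~ exists r, [/\ Rem1 r, Op1 r, gamma r = gamma a, gamma a < r & r < a]].

Definition FS2 (gamma : nat -> nat) : Prop :=
  forall a b, a < b -> Add0 a -> Op0 b -> val a = val b ->
    exists r, [/\ a < r, r < b, Rem1 r, Op1 r & a = gamma r].

End Events.

From mathcomp Require Import all_boot finmap.
From Stdlib Require Import Classical.
Set Implicit Arguments. Unset Strict Implicit. Unset Printing Implicit Defensive.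
Local Open Scope fset_scope.

(** Each correct triple determines D_{i+1} from D_i and e_i, so a witness, if
   any, is the canonical run [state] of the set operations, and x \in D_n
   exactly when x is live at n: some successful add of x before e_n is not
   followed by a successful remove of x before e_n. Both specifications then
   say the same thing: status-1 events find their key live and status-0
   events find it dead. From a witness, gamma a is the last successful add of
   val a before a; conversely, FS1 and FS2 show that gamma a keeps val a live
   up to a, and that a live key at a status-0 event would contradict FS2. *)

(* Junk value [0] when no index below [n] satisfies [p]. *)
Fixpoint last_below (p : pred nat) (n : nat) : nat :=
  if n is m.+1 then (if p m then m else last_below p m) else 0.

Lemma last_belowP (p : pred nat) n g : g < n -> p g ->
  [/\ g <= last_below p n, last_below p n < n & p (last_below p n)].
Proof.
elim: n => // n IH; rewrite ltnS leq_eqVlt => /predU1P[-> pg | lt_gn pg] /=.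
  by rewrite pg.
case: ifP => [pn | _]; first by rewrite ltnW.
by have [le_g lt_n p_last] := IH lt_gn pg; rewrite le_g p_last ltnS ltnW.
Qed.

Section Events.
Variables (knd : nat -> kind) (chi : nat -> status) (val : nat -> nat).

Lemma Op1E a : Op1 knd chi a <-> chi a = S1.
Proof. by rewrite /Op1 /IsAdd /IsRem /IsCnt; case: (knd a); intuition. Qed.

Lemma Op0E a : Op0 knd chi a <-> chi a = S0.
Proof. by rewrite /Op0 /IsAdd /IsRem /IsCnt; case: (knd a); intuition. Qed.

Lemma Add0_Op0 a : Add0 knd chi a -> Op0 knd chi a.
Proof. by case=> _ /Op0E. Qed.

Lemma Rem1_Op1 r : Rem1 knd chi r -> Op1 knd chi r.
Proof. by case=> _ /Op1E. Qed.

Definition is_add0 a : bool := if (knd a, chi a) is (Add, S0) then true else false.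
Definition is_rem1 a : bool := if (knd a, chi a) is (Rem, S1) then true else false.

Lemma is_add0P a : reflect (Add0 knd chi a) (is_add0 a).
Proof.
by rewrite /is_add0 /Add0 /IsAdd; case: (knd a); case: (chi a); constructor; intuition.
Qed.

Lemma is_rem1P a : reflect (Rem1 knd chi a) (is_rem1 a).
Proof.
by rewrite /is_rem1 /Rem1 /IsRem; case: (knd a); case: (chi a); constructor; intuition.
Qed.

Definition step (D : {fset nat}) (a : nat) : {fset nat} :=
  if is_add0 a then val a |` D else if is_rem1 a then D `\ val a else D.

Fixpoint state (n : nat) : {fset nat} :=
  if n is m.+1 then step (state m) m else fset0.

Lemma in_step D a x : (x \in step D a) =
  (is_add0 a && (val a == x)) || (x \in D) && ~~ (is_rem1 a && (val a == x)).
Proof.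
rewrite /step /is_add0 /is_rem1.
by case: (knd a); case: (chi a);
  rewrite /= ?in_fset1U ?in_fsetD1 ?andbT ?(eq_sym x) // andbC.
Qed.

Lemma correct_stepE D a D' : correct knd chi val D a D' <->
  [/\ D' = step D a, chi a = S1 -> val a \in D & chi a = S0 -> val a \notin D].
Proof.
rewrite /correct /step /is_add0 /is_rem1 /Add0 /Add1 /Rem0 /Rem1 /Cnt0 /Cnt1.
rewrite /IsAdd /IsRem /IsCnt.
by case: (knd a); case: (chi a); (split=> [C | [-> in1 out0]]; [split|]); intuition congruence.
Qed.

Definition live (x n : nat) : Prop :=
  exists g, [/\ g < n, Add0 knd chi g, val g = x &
    forall r, g < r -> r < n -> Rem1 knd chi r -> val r <> x].

Lemma live_succ x n : live x n.+1 <->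
  is_add0 n && (val n == x) \/ live x n /\ ~~ (is_rem1 n && (val n == x)).
Proof.
split.
- case=> g [lt_gn A0g vg no_rem]; case: (eqVneq g n) => [<- | ne_gn].
    by left; apply/andP; split; [apply/is_add0P | apply/eqP].
  have lt_g : g < n by rewrite ltn_neqAle ne_gn -ltnS.
  right; split.
    by exists g; split=> // r lt_gr lt_rn; apply: no_rem; rewrite // ltnW.
  by apply/negP=> /andP[/is_rem1P R1n /eqP vn]; apply: (no_rem n).
- case=> [/andP[/is_add0P A0n /eqP vn] | [[g [lt_gn A0g vg no_rem]] not_removed]].
    by exists n; split=> // r lt_nr; rewrite ltnS leqNgt lt_nr.
  exists g; split=> //; first exact: ltnW.
  move=> r lt_gr; rewrite ltnS leq_eqVlt => /predU1P[-> /is_rem1P R1n vn | lt_rn].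
    by rewrite R1n vn eqxx in not_removed.
  exact: no_rem.
Qed.

Lemma in_state x n : x \in state n <-> live x n.
Proof.
elim: n => [|n IH]; first by rewrite in_fset0; split=> // [[g []]].
rewrite /= in_step live_succ -IH.
by split=> [/orP[-> | /andP[-> ->]] | [-> | [-> ->]]]; rewrite ?orbT; auto.
Qed.

Definition live_consistent : Prop :=
  forall a, (chi a = S1 -> live (val a) a) /\ (chi a = S0 -> ~ live (val a) a).

Lemma witnesses_state Ds : witnesses knd chi val Ds -> forall n, Ds n = state n.
Proof.
case=> Ds0 Dscorrect; elim=> // n IH.
by have [-> _ _] := (correct_stepE _ _ _).1 (Dscorrect n); rewrite IH.
Qed.

Lemma witnessesP : (exists Ds, witnesses knd chi val Ds) <-> live_consistent.
Proof.
split=> [[Ds Dswit] a | consistent].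
  have [_ in1 out0] := (correct_stepE _ _ _).1 (Dswit.2 a).
  rewrite (witnesses_state Dswit) in in1 out0.
  by split=> [/in1 | /out0 /negP]; rewrite in_state.
exists state; split=> // a; apply/correct_stepE; split=> //.
  by move=> /(consistent a).1 /in_state.
by move=> /(consistent a).2 live_a; apply/negP=> /in_state.
Qed.

Definition last_add (x n : nat) : nat :=
  last_below (fun g => is_add0 g && (val g == x)) n.

Lemma last_addP x n g : g < n -> Add0 knd chi g -> val g = x ->
  [/\ g <= last_add x n, last_add x n < n,
      Add0 knd chi (last_add x n) & val (last_add x n) = x].
Proof.
move=> lt_gn /is_add0P A0g /eqP vg.
have := @last_belowP (fun g => is_add0 g && (val g == x)) n g lt_gn.
by rewrite A0g vg => /(_ isT) [-> -> /andP[/is_add0P A0 /eqP ->]].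
Qed.

Lemma live_last_add x n : live x n ->
  [/\ last_add x n < n, Add0 knd chi (last_add x n), val (last_add x n) = x &
      forall r, last_add x n < r -> r < n -> Rem1 knd chi r -> val r <> x].
Proof.
case=> g [lt_gn A0g vg no_rem]; have [le_g lt_n A0 v] := last_addP lt_gn A0g vg.
by split=> // r lt_r; apply: no_rem; apply: leq_ltn_trans lt_r.
Qed.

Lemma FS1_FS0 gamma : FS1 knd chi val gamma -> FS0 knd chi gamma.
Proof. by move=> F1 a /F1[]. Qed.

Section FromGamma.
Variable gamma : nat -> nat.
Hypotheses (F1 : FS1 knd chi val gamma) (F2 : FS2 knd chi val gamma).

Lemma FS_live1 a : chi a = S1 -> live (val a) a.
Proof.
move=> /Op1E /F1[lt_ga A0ga vga no_rem_a].
exists (gamma a); split=> // r lt_gar lt_ra R1r vr.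
have [lt_gr A0gr vgr no_rem_r] := F1 (Rem1_Op1 R1r).
have vgg : val (gamma r) = val (gamma a) by rewrite -vgr vr vga.
case: (ltngtP (gamma r) (gamma a)) => [lt_g | gt_g | eq_g].
- have [r' [lt_gr' lt_r'a R1r' _ eq_g']] := F2 lt_g A0gr (Add0_Op0 A0ga) vgg.
  apply: no_rem_r; exists r'; split=> //; first exact: Rem1_Op1.
  exact: ltn_trans lt_r'a lt_gar.
- have [r' [lt_gr' lt_r'a R1r' _ eq_g']] :=
    F2 gt_g A0ga (Add0_Op0 A0gr) (esym vgg).
  apply: no_rem_a; exists r'; split=> //; first exact: Rem1_Op1.
  exact: ltn_trans lt_r'a (ltn_trans lt_gr lt_ra).
- by apply: no_rem_a; exists r; split=> //; apply: Rem1_Op1.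
Qed.

Lemma FS_not_live0 a : chi a = S0 -> ~ live (val a) a.
Proof.
move=> /Op0E Op0a [g [lt_ga A0g vg no_rem]].
have [r [lt_gr lt_ra R1r _ gr]] := F2 lt_ga A0g Op0a vg.
have [_ _ vr _] := F1 (Rem1_Op1 R1r).
by apply: (no_rem r); rewrite // vr -gr.
Qed.

Lemma FS_live_consistent : live_consistent.
Proof. by move=> a; split; [apply: FS_live1 | apply: FS_not_live0]. Qed.

End FromGamma.

Section ToGamma.
Hypothesis consistent : live_consistent.

Lemma live_consistent_FS1 : FS1 knd chi val (fun a => last_add (val a) a).
Proof.
move=> a /Op1E /(consistent a).1 /live_last_add[lt_ga A0ga vga no_rem].
split=> // [[r [R1r /Op1E /(consistent r).1 /live_last_add[_ _ vgr _]
                 eq_g lt_gr lt_ra]]].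
by apply: (no_rem r); rewrite // -vgr eq_g.
Qed.

Lemma live_consistent_FS2 : FS2 knd chi val (fun a => last_add (val a) a).
Proof.
move=> a b lt_ab A0a /Op0E chib vab.
pose P r := [&& a < r, r < b, is_rem1 r & val r == val a].
have [r0 Pr0] : exists r, P r.
  apply: NNPP => none; apply: ((consistent b).2 chib).
  exists a; split=> // r lt_ar lt_rb R1r vr; apply: none.
  by exists r; apply/and4P; split=> //; [apply/is_rem1P | rewrite vr vab].
(* The first such remove is matched with a: a later add of the key before it
   would find the key still present. *)
case: (ex_minnP (ex_intro P r0 Pr0)) => r.
move=> /and4P[lt_ar lt_rb /is_rem1P R1r /eqP vr] r_min.
exists r; split=> //; first exact: Rem1_Op1.
have [le_ag lt_gr A0g vg] := last_addP lt_ar A0a (esym vr).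
apply/eqP; rewrite eqn_leq le_ag leqNgt; apply/negP => lt_ag.
apply: ((consistent _).2 A0g.2); rewrite vg.
exists a; split=> // r' lt_ar' lt_r'g R1r' vr'.
have lt_r'r := ltn_trans lt_r'g lt_gr.
have /r_min : P r'.
  apply/and4P; split=> //; last by rewrite vr' vr.
  - exact: ltn_trans lt_r'r lt_rb.
  - exact/is_rem1P.
by rewrite leqNgt lt_r'r.
Qed.

End ToGamma.

End Events.

Theorem theorem2p3 (knd : nat -> kind) (chi : nat -> status) (val : nat -> nat) :
  (forall a, IsCnt knd a -> chi a <> Sf) ->
  ((exists Ds : nat -> {fset nat}, witnesses knd chi val Ds) ->
     exists gamma : nat -> nat,
       [/\ FS0 knd chi gamma, FS1 knd chi val gamma & FS2 knd chi val gamma]) /\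
  ((exists gamma : nat -> nat,
       [/\ FS0 knd chi gamma, FS1 knd chi val gamma & FS2 knd chi val gamma]) ->
     exists Ds : nat -> {fset nat}, witnesses knd chi val Ds).
Proof.
(* Count events with status f leave the state unchanged like any failed
   event. *)
move=> _; split=> [/witnessesP consistent | [gamma [_ F1 F2]]].
  exists (fun a => last_add knd chi val (val a) a).
  have F1 := live_consistent_FS1 consistent.
  by split; [exact: FS1_FS0 F1 | | exact: live_consistent_FS2].
by apply/witnessesP; apply: FS_live_consistent F1 F2.
Qed.
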